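(* Let $G$ be a bipartite graph with bipartition $(A,B)$, and let $A$ be the union of disjoint sets $A_1,A_2$, each of which is laminar in $G$. Then the following are equivalent: (a) every hole of $G$ has length four; (b) there is a tree $T$ with $V(T)=B$ such that for each $a\in A$, $N(a)$ is the vertex set of a subtree of $T$.
   Context: A hole is an induced cycle of length at least four. $N(a)$ denotes the set of neighbours of $a$. A set $A'\subseteq A$ is laminar in $G$ if for all distinct $a,a'\in A'$, either $N(a)\subseteq N(a')$, or $N(a')\subseteq N(a)$, or $N(a)\cap N(a')=\emptyset$. *)

From mathcomp Require Import all_boot.
Set Implicit Arguments.
Unset Strict Implicit.
Unset Printing Implicit Defensive.

Section Graphs.
Variable V : finType.

Definition simple_graph (adj : rel V) : Prop :=
  symmetric adj /\ irreflexive adj.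

Definition nbhd (adj : rel V) (a : V) : {set V} := [set x | adj a x].

Definition bipartition (adj : rel V) (A B : {set V}) : Prop :=
  [disjoint A & B] /\ A :|: B = [set: V] /\
  (forall x y, adj x y -> (x \in A /\ y \in B) \/ (x \in B /\ y \in A)).

Definition laminar (adj : rel V) (A' : {set V}) : Prop :=
  forall a a', a \in A' -> a' \in A' -> a != a' ->
    [|| nbhd adj a \subset nbhd adj a',
        nbhd adj a' \subset nbhd adj a
      | [disjoint nbhd adj a & nbhd adj a']].

Definition hole (adj : rel V) (c : seq V) : Prop :=
  3 < size c /\ uniq c /\
  forall (x0 : V) i j, i < size c -> j < size c ->
    adj (nth x0 c i) (nth x0 c j) =
      (j == i.+1 %% size c) || (i == j.+1 %% size c).

Definition connected_in (t : rel V) (S : {set V}) : Prop :=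
  forall x y, x \in S -> y \in S ->
    exists p : seq V, [&& path t x p, last x p == y & all (mem S) p].

Definition acyclic (t : rel V) : Prop :=
  forall c : seq V, 2 < size c -> uniq c -> ~~ cycle t c.

Definition tree_on (t : rel V) (B : {set V}) : Prop :=
  simple_graph t /\
  (forall x y, t x y -> x \in B /\ y \in B) /\
  connected_in t B /\ acyclic t.

End Graphs.

From mathcomp Require Import all_boot zify.
Set Implicit Arguments.
Unset Strict Implicit.
Unset Printing Implicit Defensive.

(* (b) implies (a): in a hole of length at least six no two vertices have nested
   neighbourhoods, so by laminarity the successive A-vertices a_0, ..., a_(k-1) of the
   hole lie alternately in A1 and A2, and N(a_i) meets N(a_(i+1)) but not N(a_(i+2)).
   Such a cyclic chain of subtrees cannot exist in a tree: deleting a leaf preserves it,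
   and a nonempty vertex set in which every vertex has two neighbours spans a cycle.

   (a) implies (b), even without laminarity.  For S ⊆ B, say that z hangs on z' ∈ S if
   z' lies in every trace N(a) ∩ S with at least two elements containing z; then z can
   be attached as a leaf at z' to a tree on S - z realising all traces.  By induction
   every S with |S| ≥ 2 has two hanging vertices: join e and w when some trace is
   {e, w}; some b ∈ S has at most one such neighbour x, since a cycle of these pairs
   interleaved with the corresponding a's is a hole of length at least six, and of the
   two vertices hanging in S - b the one different from x hangs in S.  A vertex z
   hanging on z' has no neighbour but z', so the same step with b := z yields a second. *)

Lemma eqn_modD_small n m d : 0 < d < n -> (m + d == m %[mod n]) = false.
Proof.
by move=> /andP[d0 dn]; rewrite -[X in _ == X %[mod n]]addn0 eqn_modDl mod0n modn_small //; lia.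
Qed.

Lemma modS_mod n i : (i %% n).+1 %% n = i.+1 %% n.
Proof. by rewrite -addn1 modnDml addn1. Qed.

Lemma eqn_mod_double n i j : (i.*2 == j.*2 %[mod n.*2]) = (i == j %[mod n]).
Proof.
case: n => [|n]; first by rewrite !modn0 !eqn_leq !leq_double.
by rewrite -!muln2 -!muln_modl eqn_pmul2r.
Qed.

Lemma succ_mod_interleave n l m : l < n -> m < n ->
  (m.*2.+1 == l.*2.+1 %% n.*2) || (l.*2 == m.*2.+2 %% n.*2) = (m == l) || (l == m.+1 %% n).
Proof.
move=> ln mn; have mn2 : m.*2.+1 < n.*2 by rewrite -doubleS leq_double.
have ln2 : l.*2 < n.*2 by rewrite ltn_double.
have -> : (m.*2.+1 == l.*2.+1 %% n.*2) = (m == l).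
  by rewrite -{1}(modn_small mn2) -!(addn1 _.*2) eqn_modDr eqn_mod_double !modn_small.
by rewrite -{1}(modn_small ln2) -doubleS eqn_mod_double (modn_small ln).
Qed.

Lemma succ_mod_double_parity n i j : j < n.*2 -> odd i = odd j -> (j == i.+1 %% n.*2) = false.
Proof.
move=> jn oij; apply/negP => /eqP e.
by have := odd_mod i.+1 (odd_double n); rewrite -e /= oij; case: (odd j).
Qed.

Lemma succ_mod_pair_inj n l m : 2 < n -> l < n -> m < n ->
  (l == m) || (l == m.+1 %% n) -> (l.+1 %% n == m) || (l.+1 %% n == m.+1 %% n) -> l = m.
Proof.
move=> n2 ln mn /orP[/eqP //|/eqP lm] /orP[/eqP ml|]; last first.
  by rewrite -(addn1 l) -(addn1 m) eqn_modDr !modn_small // => /eqP.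
by have := @eqn_modD_small n m 2 n2; rewrite addn2 -modS_mod -lm ml (modn_small mn) eqxx.
Qed.

Section CyclicNth.
Variables (T : Type) (x0 : T).

Definition cnth (c : seq T) i := nth x0 c (i %% size c).

Lemma cycle_cnth (R : rel T) c i : 0 < size c -> cycle R c -> R (cnth c i) (cnth c i.+1).
Proof.
case: c => [|y c] // _; rewrite /cnth -modS_mod; move: (i %% _) (ltn_pmod i (ltn0Sn (size c))).
move=> {}i ilt; rewrite (cycle_path x0) => /(pathP x0) Hc.
have [ei|ilt'] := eqVneq i (size c).
  by rewrite ei modnn; have := Hc 0 isT; rewrite /= (last_nth x0).
have ilt2 : i.+1 < (size c).+1 by rewrite ltnS ltn_neqAle ilt' -ltnS.
by rewrite modn_small //; apply: (Hc i.+1).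
Qed.

End CyclicNth.

Lemma cnth_index (T : eqType) (x0 : T) c x : x \in c -> cnth x0 c (index x c) = x.
Proof. by move=> xc; rewrite /cnth modn_small ?index_mem ?nth_index. Qed.

Section BranchingCycle.
Variables (T : finType) (R : rel T) (X : {set T}).
Hypotheses (Rsym : symmetric R) (Rirr : irreflexive R)
  (branching : {in X, forall x p, exists y, [&& y \in X, R x y & y != p]}).

Lemma cycle_of_branching_path v u s : R v u -> path R u s -> uniq [:: v, u & s] ->
  {subset [:: v, u & s] <= X} -> exists c, [/\ 2 < size c, uniq c, {subset c <= X} & cycle R c].
Proof.
have [k sk] : exists k, #|T| - size s <= k by exists (#|T| - size s).
elim: k v u s sk => [|k IH] v u s sk Rvu Rus us sX.
  have := max_card (mem [:: v, u & s]); rewrite (card_uniqP us) /= => lt.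
  by move: sk; rewrite leqn0 subn_eq0 leqNgt (ltnW lt).
have [y /and3P[yX Rvy yu]] := branching (sX v (mem_head _ _)) u.
have [ys|yNs] := boolP (y \in [:: v, u & s]); last first.
  apply: (IH y v (u :: s)); rewrite /= ?Rvu ?Rus ?(Rsym y) ?yNs //.
  - by rewrite subnS -subn1 leq_subLR add1n.
  - by move=> x; rewrite inE => /predU1P[->|/sX].
have {}ys : y \in s.
  by move: ys; rewrite !inE (negbTE yu) /= => /predU1P[yv|] //; rewrite yv Rirr in Rvy.
case/splitPr: ys Rus us sX => s1 s2 Rus us sX.
exists [:: v, u & rcons s1 y]; split.
- by rewrite /= size_rcons.
- by move: us; rewrite -cat_rcons -!cat_cons cat_uniq => /andP[].
- by move=> x xc; apply: sX; rewrite -cat_rcons -!cat_cons mem_cat xc.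
- move: Rus; rewrite cat_path /= => /and3P[Rs1 Ry _].
  by rewrite /= Rvu !rcons_path Rs1 Ry last_rcons Rsym.
Qed.

Lemma cycle_of_branching : X != set0 ->
  exists c, [/\ 2 < size c, uniq c, {subset c <= X} & cycle R c].
Proof.
case/set0Pn => x xX; have [u /and3P[uX Rxu ux]] := branching xX x.
apply: (cycle_of_branching_path (s := [::]) Rxu) => //=; first by rewrite inE eq_sym ux.
by move=> y; rewrite !inE => /predU1P[->|/eqP->].
Qed.

End BranchingCycle.

Section Subtrees.
Variables (V : finType) (t : rel V).
Hypotheses (tsym : symmetric t) (tirr : irreflexive t).

Lemma connected_in_le1 (W : {set V}) : #|W| <= 1 -> connected_in t W.
Proof. by move=> /card_le1_eqP W1 x y xW yW; exists [::]; rewrite /= (W1 x y xW yW) eqxx. Qed.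

Lemma connected_in_nbr (W : {set V}) l : connected_in t W -> l \in W -> W != [set l] ->
  exists2 y, y \in W & t l y.
Proof.
move=> HW lW Wl; have /set0Pn[x /setD1P[xl xW]] : W :\ l != set0.
  by apply: contraNneq Wl => E; rewrite -(setD1K lW) E setU0.
have [[|y p] /and3P[/= ty /eqP lp pW]] := HW l x lW xW; first by rewrite lp eqxx in xl.
by exists y; [case/andP: pW | case/andP: ty].
Qed.

Lemma connected_in_setD1 (X W : {set V}) l : connected_in t W -> W \subset X ->
  #|[set y in X | t l y]| <= 1 -> connected_in t (W :\ l).
Proof.
move=> HW /subsetP WX /card_le1_eqP leaf x y /setD1P[xl xW] /setD1P[yl yW].
have [p /and3P[pp /eqP lp pW]] := HW x y xW yW.
case: (shortenP pp) lp => q pq uq qp lq; exists q; rewrite pq lq eqxx /=.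
have qW v : v \in x :: q -> v \in W.
  by rewrite inE => /predU1P[->//|/qp vp]; exact: (allP pW).
apply/allP => v vq; rewrite /= in_setD1 (qW v) ?inE ?vq ?orbT // andbT.
apply: contraTneq vq => ->{v}; apply/negP => lq'.
case/splitPr: lq' pq uq lq qW => q1 [|w q2].
  by rewrite last_cat /= => _ _ ly; rewrite ly eqxx in yl.
rewrite cat_path -cat_cons cat_uniq /= => /and4P[_ tul tlw _] /and5P[_ nuq _ _ _] _ qW.
have uW : last x q1 \in W by apply: qW; rewrite -cat_cons mem_cat mem_last.
have wW : w \in W by apply: qW; rewrite -cat_cons mem_cat !inE eqxx !orbT.
have uw : last x q1 = w by apply: leaf; rewrite inE ?WX // ?tlw // tsym.
by move: nuq; rewrite -uw mem_last !orbT.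
Qed.

Definition subtree_chain (S : nat -> {set V}) k :=
  [/\ forall m, S (m + k) = S m, forall m, connected_in t (S m),
      forall m, S m :&: S m.+1 != set0 & forall m, [disjoint S m & S m.+2]].

Lemma subtree_chain_setD1 (X : {set V}) S k l : 0 < k -> subtree_chain S k ->
  (forall m, S m \subset X) -> #|[set y in X | t l y]| <= 1 ->
  subtree_chain (fun m => S m :\ l) k.
Proof.
move=> k0 [per con meet dis] SX leaf; split=> [m|m|m|m] /=.
- by rewrite per.
- exact: connected_in_setD1 (con m) (SX m) leaf.
- suff meetS j : (S j.+1 :\ l) :&: (S j.+2 :\ l) != set0.
    rewrite -per -(per m.+1) addSn.
    by rewrite (_ : m + k = (m + k).-1.+1) ?meetS // prednK // addn_gt0 k0 orbT.
  (* Were l the only common vertex, the neighbour of l in X would be common as well,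
     unless one of the two sets is {l}; but then l also lies in S j or in S j.+3. *)
  apply/negP => /eqP E.
  have onlyl w : w \in S j.+1 -> w \in S j.+2 -> w = l.
    by move=> h1 h2; apply/eqP; apply: contraT => wl; rewrite -(in_set0 w) -E !inE wl h1 h2.
  have [w /setIP[w1 w2]] := set0Pn _ (meet j.+1); have wl := onlyl w w1 w2; subst w.
  have [E1|N1] := eqVneq (S j.+1) [set l].
    have [u /setIP[u0 u1]] := set0Pn _ (meet j); rewrite E1 inE in u1; rewrite (eqP u1) in u0.
    by have := disjointFr (dis j) u0; rewrite w2.
  have [E2|N2] := eqVneq (S j.+2) [set l].
    have [u /setIP[u2 u3]] := set0Pn _ (meet j.+2); rewrite E2 inE in u2; rewrite (eqP u2) in u3.
    by have := disjointFr (dis j.+1) w1; rewrite u3.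
  have [y y1 ty] := connected_in_nbr (con j.+1) w1 N1.
  have [y' y2 ty'] := connected_in_nbr (con j.+2) w2 N2.
  have yy' : y = y'.
    move/card_le1_eqP: leaf; apply; rewrite inE ?ty ?ty' andbT.
      exact: (subsetP (SX j.+2)).
    exact: (subsetP (SX j.+1)).
  by subst y'; move: ty; rewrite (onlyl y y1 y2) tirr.
- by apply: disjointWl (subD1set _ _) _; apply: disjointWr (subD1set _ _) _.
Qed.

Lemma no_subtree_chain S k : acyclic t -> 0 < k -> ~ subtree_chain S k.
Proof.
move=> tacy k0.
suff chainX (X : {set V}) (S' : nat -> {set V}) :
    (forall m, S' m \subset X) -> ~ subtree_chain S' k.
  by apply: (chainX setT) => m; apply: subsetT.
have [n] := ubnP #|X|; elim: n X S' => // n IH X {}S /ltnSE cX SX chain.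
have [/exists_inP[l lX leaf] | noleaf] := boolP [exists l in X, #|[set y in X | t l y]| <= 1].
  apply: (IH (X :\ l) (fun m => S m :\ l)).
  - by rewrite (cardsD1 l X) lX in cX.
  - by move=> m; apply: setSD.
  - exact: subtree_chain_setD1 chain SX leaf.
have [_ _ meet _] := chain; have [x /setIP[/(subsetP (SX 0)) xX _]] := set0Pn _ (meet 0).
have [c [c2 uc _]] : exists c, [/\ 2 < size c, uniq c, {subset c <= X} & cycle t c].
  apply: cycle_of_branching => //; last by apply/set0Pn; exists x.
  move=> v vX p; move/exists_inPn/(_ v vX): noleaf; rewrite -ltnNge.
  case/card_gt1P => y1 [y2 []]; rewrite !inE => /andP[y1X ty1] /andP[y2X ty2] y12.
  have [y1p|] := eqVneq y1 p; [exists y2; rewrite -y1p eq_sym | exists y1]; exact/and3P.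
by apply/negP; apply: tacy.
Qed.

End Subtrees.

Section AddLeaf.
Variables (V : finType) (t : rel V) (z z' : V).
Hypothesis z'z : z' != z.

Definition add_leaf := [rel x y | t x y || (x == z) && (y == z') || (x == z') && (y == z)].

Lemma connected_in_add_leaf (W : {set V}) : connected_in t (W :\ z) ->
  (z \in W -> 1 < #|W| -> z' \in W) -> connected_in add_leaf W.
Proof.
move=> HW Hz; have [/connected_in_le1//|W2] := leqP #|W| 1.
have lift x y : x \in W :\ z -> y \in W :\ z ->
    exists2 p, path add_leaf x p & (last x p == y) && all (mem W) p.
  move=> xW yW; have [p /and3P[pp lp pW]] := HW x y xW yW; exists p.
    by apply: sub_path pp => u v tuv; rewrite /= tuv.
  by rewrite lp; apply: sub_all pW => v /setD1P[].
have z'W : z \in W -> z' \in W :\ z by move=> zW; rewrite in_setD1 z'z (Hz zW W2).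
move=> x y xW yW; have [xz|xz] := eqVneq x z; have [yz|yz] := eqVneq y z.
- by exists [::]; rewrite /= xz yz eqxx.
- subst x; have [|p pp /andP[lp pW]] := lift z' y (z'W xW); first by rewrite in_setD1 yz.
  exists (z' :: p); rewrite /= pp lp pW !eqxx andbT orbT /=.
  by case/setD1P: (z'W xW) => _ ->.
- subst y; have [|p pp /andP[/eqP lp pW]] := lift x z' _ (z'W yW); first by rewrite in_setD1 xz.
  exists (rcons p z); rewrite rcons_path last_rcons all_rcons pp lp /= !eqxx !orbT pW andbT.
  exact: yW.
- have [||p pp /andP[lp pW]] := lift x y; rewrite ?in_setD1 ?xz ?yz //.
  by exists p; rewrite pp lp.
Qed.

Lemma acyclic_add_leaf : acyclic t -> (forall y, t z y = false) -> (forall y, t y z = false) ->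
  acyclic add_leaf.
Proof.
move=> tacy tz zt c c2 uc; apply/negP => cc.
have [zc|zNc] := boolP (z \in c); last first.
  have cz : all (predC1 z) c by apply/allP => x xc; apply: contraNneq zNc => <-.
  have := tacy c c2 uc; rewrite (@eq_in_cycle _ _ t add_leaf _ _ cz) ?cc // => x y /= xz yz.
  by rewrite (negbTE xz) (negbTE yz) !andbF !orbF.
case/rot_to: zc => i d ed; move: c2 uc cc.
rewrite -(size_rot i) -(rot_uniq i) -(rot_cycle i) ed.
case: d {ed} => [|y [|u d]] //= _ /andP[_ /andP[yud _]].
rewrite rcons_path /= tz zt eqxx (eq_sym z) (negbTE z'z) !andbF !orbF andbT.
case/and4P => /eqP yz' _ _ /eqP lz'; by move: yud; rewrite yz' -lz' mem_last.
Qed.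

Lemma tree_on_add_leaf S : tree_on t (S :\ z) -> z \in S -> z' \in S -> tree_on add_leaf S.
Proof.
move=> [[tsym tirr] [tS [tconn tacy]]] zS z'S.
have tz y : t z y = false by apply/negP => /tS[/setD1P[]]; rewrite eqxx.
split; [split|split; [|split]].
- move=> x y; rewrite /= tsym [(y == z) && _]andbC [(y == z') && _]andbC.
  by rewrite orbAC.
- move=> x; rewrite /= tirr /=; apply/negP.
  by case/orP=> /andP[/eqP-> /eqP e]; move: z'z; rewrite e eqxx.
- move=> x y /orP[/orP[/tS[/setD1P[_ ->] /setD1P[_ ->]]//|] |] /andP[/eqP-> /eqP->];
    by split.
- exact: connected_in_add_leaf tconn (fun _ _ => z'S).
- by apply: (acyclic_add_leaf tacy tz) => y; rewrite tsym tz.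
Qed.

End AddLeaf.

Section HoleIndex.
Variables (V : finType) (adj : rel V) (c : seq V) (x0 : V).
Hypothesis hc : hole adj c.
Local Notation n := (size c).
Local Notation v := (cnth x0 c).

Let n_gt0 : 0 < n. Proof. by case: hc => c3 _; apply: leq_trans c3. Qed.

Lemma hole_adj_mod i j : adj (v i) (v j) = (j == i.+1 %[mod n]) || (i == j.+1 %[mod n]).
Proof. by case: hc => _ [_ H]; rewrite /cnth H ?ltn_pmod // !modS_mod. Qed.

Lemma hole_cnth_eq i j : (v i == v j) = (i == j %[mod n]).
Proof. by case: hc => _ [uc _]; rewrite /cnth nth_uniq ?ltn_pmod. Qed.

End HoleIndex.

Section HoleNbhds.
Variables (V : finType) (adj : rel V) (c : seq V).
Hypothesis hc : hole adj c.
Local Notation n := (size c).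

Lemma hole_nbhd_subset : 4 < n ->
  {in c &, forall x y, nbhd adj x \subset nbhd adj y -> x = y}.
Proof.
move=> n4 x y xc yc; have n0 : 0 < n by apply: leq_trans n4.
pose v := cnth x c; rewrite -(cnth_index x xc) -(cnth_index x yc).
move: (index x c) (index y c) => i j /subsetP sub.
apply/eqP; rewrite (hole_cnth_eq _ hc); apply: contraT => ij.
(* v j is adjacent to both neighbours v (i + 1) and v (i - 1) of v i, which forces
   j = i + 2 = i - 2 (mod n). *)
have nbr k : adj (v i) (v k) -> adj (v j) (v k).
  by move=> h; have := sub (v k); rewrite !inE; apply.
have in_i : i == (i + n.-1).+1 %[mod n] by rewrite -addnS prednK // modnDr.
have /nbr : adj (v i) (v i.+1) by rewrite (hole_adj_mod _ hc) eqxx.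
rewrite (hole_adj_mod _ hc) -!(addn1 i) -(addn1 j) eqn_modDr (negbTE ij) /= => E1.
have /nbr : adj (v i) (v (i + n.-1)) by rewrite (hole_adj_mod _ hc) in_i orbT.
rewrite (hole_adj_mod _ hc) -(eqP in_i) [_ == i %% n]eq_sym (negbTE ij) orbF => E2.
have e1 : (i + 4) %% n = (j + 2) %% n.
  by apply/eqP; rewrite (_ : i + 4 = (i + 1).+1 + 2) ?eqn_modDr 1?eq_sym //; lia.
have e2 : (j + 2) %% n = i %% n.
  rewrite (_ : j + 2 = j.+1 + 1); last lia.
  by rewrite -modnDml -(eqP E2) modnDml -addnA addn1 prednK // modnDr.
by have := @eqn_modD_small n i 4 n4; rewrite e1 e2 eqxx.
Qed.

Lemma hole_laminar_disjoint (L : {set V}) : laminar adj L -> 4 < n ->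
  {in c &, forall x y, x != y -> x \in L -> y \in L -> [disjoint nbhd adj x & nbhd adj y]}.
Proof.
move=> lam n4 x y xc yc xy xL yL; case/or3P: (lam x y xL yL xy) => // sub.
  by rewrite (hole_nbhd_subset n4 xc yc sub) eqxx in xy.
by rewrite (hole_nbhd_subset n4 yc xc sub) eqxx in xy.
Qed.

End HoleNbhds.

Section Bipartite.
Variables (V : finType) (adj : rel V) (A B : {set V}).
Hypothesis Hb : bipartition adj A B.

Lemma bipartition_inB x : (x \in B) = (x \notin A).
Proof.
case: Hb => AB [ABT _]; apply/idP/idP => [xB|xA]; first by rewrite (disjointFl AB xB).
by have := in_setT x; rewrite -ABT inE (negbTE xA).
Qed.

Lemma bipartition_adj x y : adj x y -> (y \in A) = (x \notin A).
Proof.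
case: Hb => _ [_ E] /E[] [xX yY]; first by rewrite xX -[y \in A]negbK -bipartition_inB yY.
by rewrite yY -bipartition_inB xX.
Qed.

Lemma bipartition_nbhd a : a \in A -> nbhd adj a \subset B.
Proof.
move=> aA; apply/subsetP => x; rewrite inE bipartition_inB.
by move/bipartition_adj ->; rewrite aA.
Qed.

End Bipartite.

Section BipartiteHoles.
Variables (V : finType) (adj : rel V) (A B A1 A2 : {set V}) (c : seq V).
Hypotheses (Hb : bipartition adj A B) (hc : hole adj c).

Lemma hole_alternates x0 : exists s, forall m, cnth x0 c (s + m.*2) \in A.
Proof.
have adjS i : adj (cnth x0 c i) (cnth x0 c i.+1) by rewrite (hole_adj_mod _ hc) eqxx.
have stepA i : cnth x0 c i \in A -> cnth x0 c i.+2 \in A.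
  by rewrite (bipartition_adj Hb (adjS i.+1)) (bipartition_adj Hb (adjS i)) negbK.
have [s sA] : exists s, cnth x0 c s \in A.
  case A0 : (cnth x0 c 0 \in A); first by exists 0.
  by exists 1; rewrite (bipartition_adj Hb (adjS 0)) A0.
by exists s; elim=> [|m IH]; rewrite ?addn0 // doubleS !addnS stepA.
Qed.

Hypotheses (HA : A = A1 :|: A2) (L1 : laminar adj A1) (L2 : laminar adj A2).

Lemma hole_laminar2_disjoint : 4 < size c ->
  {in c &, forall x y, x != y -> x \in A -> y \in A -> (x \in A1) = (y \in A1) ->
    [disjoint nbhd adj x & nbhd adj y]}.
Proof.
move=> n4 x y xc yc xy; rewrite HA !inE; case xA1: (x \in A1) => /= xA yA yA1.
  by apply: (hole_laminar_disjoint hc L1 n4) => //; rewrite -yA1.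
by apply: (hole_laminar_disjoint hc L2 n4) => //; rewrite -yA1 in yA.
Qed.

Lemma hole_nbhd_chain : 4 < size c -> exists v : nat -> V,
  [/\ forall m, v m \in A, forall m, v (m + size c) = v m,
      forall m, nbhd adj (v m) :&: nbhd adj (v m.+1) != set0
    & forall m, [disjoint nbhd adj (v m) & nbhd adj (v m.+2)]].
Proof.
move=> n4; have n0 : 0 < size c by apply: leq_trans n4.
have /hasP[x0 _ _] : has predT c by rewrite has_predT.
have [s sA] := hole_alternates x0; pose v m := cnth x0 c (s + m.*2).
have vA m : v m \in A := sA m.
have vc m : v m \in c by rewrite /v /cnth mem_nth // ltn_pmod.
have meet m : nbhd adj (v m) :&: nbhd adj (v m.+1) != set0.
  apply/set0Pn; exists (cnth x0 c (s + m.*2).+1).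
  by rewrite !inE /v doubleS !addnS !(hole_adj_mod _ hc) !eqxx orbT.
have vneq m d : 0 < d < 3 -> v m != v (m + d).
  by move=> d3; rewrite /v (hole_cnth_eq _ hc) doubleD addnA eq_sym eqn_modD_small //; lia.
have alt m : (v m \in A1) != (v m.+1 \in A1).
  apply: contraNneq (meet m) => same; rewrite setI_eq0.
  by apply: hole_laminar2_disjoint => //; rewrite -[m.+1]addn1 vneq.
exists v; split=> // m.
  by rewrite /v /cnth doubleD addnA -[(size c).*2]addnn addnA !modnDr.
apply: hole_laminar2_disjoint => //; first by rewrite -[m.+2]addn2 vneq.
by move: (alt m) (alt m.+1); do 3!case: (_ \in A1).
Qed.

End BipartiteHoles.

Lemma subtree_nbhds_hole_size4 (V : finType) (adj : rel V) (A B A1 A2 : {set V}) t c :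
  bipartition adj A B -> A = A1 :|: A2 -> laminar adj A1 -> laminar adj A2 ->
  tree_on t B -> (forall a, a \in A -> connected_in t (nbhd adj a)) ->
  hole adj c -> size c = 4.
Proof.
move=> Hb HA L1 L2 [[tsym tirr] [_ [_ tacy]]] tN hc; have [c3 _] := hc.
apply/eqP; apply: contraT => c4; have n4 : 4 < size c by rewrite ltn_neqAle eq_sym c4.
have [v [vA per meet dis]] := hole_nbhd_chain Hb hc HA L1 L2 n4.
exfalso; apply: (no_subtree_chain tsym tirr (S := fun m => nbhd adj (v m)) tacy
  (_ : 0 < size c)); first exact: leq_trans c3.
by split=> m //=; [rewrite per | apply: tN].
Qed.

Section Interleave.
Variables (V : finType) (adj : rel V) (n : nat) (a b : nat -> V).
Hypotheses (asym : symmetric adj) (n_gt1 : 1 < n).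
Hypotheses (a_inj : forall l m, l < n -> m < n -> a l = a m -> l = m)
  (b_inj : forall l m, l < n -> m < n -> b l = b m -> l = m)
  (a_neq_b : forall l m, l < n -> m < n -> a l != b m)
  (adj_aa : forall l m, l < n -> m < n -> adj (a l) (a m) = false)
  (adj_bb : forall l m, l < n -> m < n -> adj (b l) (b m) = false)
  (adj_ba : forall l m, l < n -> m < n -> adj (b l) (a m) = (l == m) || (l == m.+1 %% n)).

Definition interleave := mkseq (fun i => if odd i then a i./2 else b i./2) n.*2.

Lemma interleave_hole : hole adj interleave.
Proof.
have half i : i < n.*2 -> i./2 < n by rewrite ltn_half_double.
rewrite /interleave; split; first by rewrite size_mkseq; case: n n_gt1 => [|[|k]].
split.
  rewrite map_inj_in_uniq ?iota_uniq // => i j; rewrite !mem_iota !add0n => /half hi /half hj.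
  rewrite -[i in _ -> i = _]odd_double_half -[j in _ -> _ = j]odd_double_half.
  case: (odd i) (odd j) => [] [] /= e.
  - by rewrite (a_inj hi hj e).
  - by have := a_neq_b hi hj; rewrite e eqxx.
  - by have := a_neq_b hj hi; rewrite e eqxx.
  - by rewrite (b_inj hi hj e).
move=> x1 i j; rewrite size_mkseq => hi hj; rewrite !nth_mkseq //.
case oi: (odd i); case oj: (odd j).
- by rewrite adj_aa ?half // !succ_mod_double_parity // oi oj.
- have ei : i = i./2.*2.+1 by rewrite -[LHS]odd_double_half oi.
  have ej : j = j./2.*2 by rewrite -[LHS]odd_double_half oj.
  rewrite asym adj_ba ?half // [in RHS]ei [in RHS]ej [RHS]orbC succ_mod_interleave ?half //.
  by rewrite [i./2 == _]eq_sym.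
- have ei : i = i./2.*2 by rewrite -[LHS]odd_double_half oi.
  have ej : j = j./2.*2.+1 by rewrite -[LHS]odd_double_half oj.
  rewrite adj_ba ?half // [in RHS]ei [in RHS]ej succ_mod_interleave ?half //.
  by rewrite [j./2 == _]eq_sym.
- by rewrite adj_bb ?half // !succ_mod_double_parity // oi oj.
Qed.

End Interleave.

Section Traces.
Variables (V : finType) (adj : rel V) (A B : {set V}).
Hypotheses (Hs : simple_graph adj) (Hb : bipartition adj A B).

Definition trace (S : {set V}) a := nbhd adj a :&: S.

Definition trace_edge (S : {set V}) : rel V :=
  fun e w => (e != w) && [exists a, trace S a == [set e; w]].

Definition hangs (S : {set V}) z z' :=
  [/\ z' \in S, z' != z & forall a, z \in trace S a -> 1 < #|trace S a| -> z' \in trace S a].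

Definition hangable (S : {set V}) z := exists z', hangs S z z'.

Definition two_hangable (S : {set V}) :=
  exists z1 z2, [/\ z1 != z2, z1 \in S, z2 \in S, hangable S z1 & hangable S z2].

Lemma trace_edge_sym S : symmetric (trace_edge S).
Proof. by move=> e w; rewrite /trace_edge eq_sym setUC. Qed.

Lemma trace_edge_irr S : irreflexive (trace_edge S).
Proof. by move=> e; rewrite /trace_edge eqxx. Qed.

Lemma trace_edge_in S e w : trace_edge S e w -> w \in S.
Proof.
case/andP=> _ /existsP[a /eqP E].
have : w \in trace S a by rewrite E !inE eqxx orbT.
by rewrite inE => /andP[].
Qed.

Lemma hangs_trace_edge S z z' w : hangs S z z' -> trace_edge S z w -> w = z'.
Proof.
case=> _ z'z H /andP[zw /existsP[a /eqP E]].
have := H a; rewrite E cards2 zw !inE eqxx => /(_ isT isT) /orP[/eqP e|/eqP //].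
by move: z'z; rewrite e eqxx.
Qed.

Lemma hangs_setD1 S b z z' : z != b -> hangs (S :\ b) z z' -> ~~ trace_edge S b z ->
  hangs S z z'.
Proof.
move=> zb [/setD1P[_ z'S] z'z H] NE; split=> // a zT T2.
have E : trace (S :\ b) a = trace S a :\ b by rewrite /trace setIDA.
have zT' : z \in trace (S :\ b) a by rewrite E in_setD1 zb.
have [T2'|] := ltnP 1 #|trace (S :\ b) a|.
  by move: (H a zT' T2'); rewrite E => /setD1P[].
rewrite E => T1; case/negP: NE; rewrite /trace_edge eq_sym zb /=.
apply/existsP; exists a.
have bT : b \in trace S a.
  by apply: contraTT T2; rewrite -leqNgt (cardsD1 b) => /negbTE->.
have [x Ex] : exists x, trace S a :\ b = [set x].
  apply/cards1P; rewrite eqn_leq T1 card_gt0; apply/set0Pn; exists z.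
  by rewrite in_setD1 zb.
have zx : z = x by apply/set1P; rewrite -Ex in_setD1 zb.
by rewrite -(setD1K bT) Ex zx.
Qed.

Lemma hangs_pair z z' : z' != z -> hangs [set z; z'] z z'.
Proof.
move=> z'z; split=> //; first by rewrite !inE eqxx orbT.
move=> a _ T2; have -> : trace [set z; z'] a = [set z; z'].
  by apply/eqP; rewrite eqEcard subsetIr cards2 eq_sym z'z.
by rewrite !inE eqxx orbT.
Qed.

Lemma hangable_lift S b x : two_hangable (S :\ b) ->
  (forall w, trace_edge S b w -> w = x) -> exists2 z, z \in S :\ b & hangable S z.
Proof.
move=> [z1 [z2 [z12 z1S z2S [z1' h1] [z2' h2]]]] bx.
have lift z z' : z \in S :\ b -> z != x -> hangs (S :\ b) z z' ->
    exists2 z, z \in S :\ b & hangable S z.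
  move=> zS zx h; exists z => //; exists z'; apply: hangs_setD1 h _.
    by case/setD1P: zS.
  by apply: contra zx => /bx ->.
have [z1x|z1x] := eqVneq z1 x; last exact: lift z1S z1x h1.
by apply: lift z2S _ h2; rewrite -z1x eq_sym.
Qed.

Lemma trace_edge_cycle_hole (S : {set V}) c : S \subset B -> 2 < size c -> uniq c ->
  {subset c <= S} -> cycle (trace_edge S) c -> exists h, hole adj h /\ size h = (size c).*2.
Proof.
move=> /subsetP SB c2 uc cS cyc; have [asym _] := Hs.
have n0 : 0 < size c by apply: leq_trans c2.
have /hasP[x0 x0c _] : has predT c by rewrite has_predT.
set n := size c in c2 n0 *.
pose b l := nth x0 c l.
have bc l : b l \in c by rewrite /b; case: (ltnP l n) => [/mem_nth|/(nth_default x0)->].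
have bNA l : b l \in A = false by apply/negbTE; rewrite -(bipartition_inB Hb) SB ?cS.
pose a l := odflt x0 [pick a | trace S a == [set b l; b (l.+1 %% n)]].
have traceA l : l < n -> trace S (a l) = [set b l; b (l.+1 %% n)].
  move=> ln; have := cycle_cnth x0 l n0 cyc; rewrite /cnth (modn_small ln).
  case/andP=> _ /existsP[a' Ea']; rewrite /a; case: pickP => [? /eqP //|/(_ a')].
  by rewrite Ea'.
have b_in_a l m : l < n -> m < n ->
    (b l \in nbhd adj (a m)) = (l == m) || (l == m.+1 %% n).
  move=> ln mn; have <- : b l \in trace S (a m) = (b l \in nbhd adj (a m)).
    by rewrite inE cS ?bc ?andbT.
  by rewrite traceA // !inE !nth_uniq // ltn_pmod.
have aA l : l < n -> a l \in A.
  move=> ln; have : b l \in nbhd adj (a l) by rewrite b_in_a ?eqxx.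
  by rewrite inE asym => /(bipartition_adj Hb) ->; rewrite bNA.
exists (interleave n a b); split; last by rewrite size_mkseq.
apply: interleave_hole => //.
- by apply: leq_trans c2.
- move=> l m ln mn e; apply: (succ_mod_pair_inj c2 ln mn).
    by rewrite -b_in_a // -e b_in_a // eqxx.
  by rewrite -b_in_a ?ltn_pmod // -e b_in_a ?ltn_pmod // eqxx orbT.
- by move=> l m ln mn /eqP; rewrite nth_uniq // => /eqP.
- by move=> l m ln _; apply: contraTneq (aA l ln) => ->; rewrite bNA.
- by move=> l m ln mn; apply/negP => /(bipartition_adj Hb); rewrite !aA.
- by move=> l m _ _; apply/negP => /(bipartition_adj Hb); rewrite !bNA.
- by move=> l m ln mn; rewrite -b_in_a // inE asym.
Qed.

End Traces.

Section HoleFree.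
Variables (V : finType) (adj : rel V) (A B : {set V}).
Hypotheses (Hs : simple_graph adj) (Hb : bipartition adj A B)
  (Hhole : forall c, hole adj c -> size c = 4).

Lemma trace_edge_low_degree (S : {set V}) : S \subset B -> S != set0 ->
  exists b x, b \in S /\ forall w, trace_edge adj S b w -> w = x.
Proof.
move=> SB S0.
have [/exists_inP[b bS /existsP[x /forallP bx]]|] :=
  boolP [exists b in S, exists x, [forall w, trace_edge adj S b w ==> (w == x)]].
  by exists b, x; split=> // w /(implyP (bx w)) /eqP.
move/exists_inPn => branch; exfalso.
have [|c [c2 uc cS cyc]] :=
  cycle_of_branching (@trace_edge_sym _ adj S) (@trace_edge_irr _ adj S) _ S0.
  move=> x xS p; have /existsPn/(_ p)/forallPn[w] := branch x xS.
  by rewrite negb_imply => /andP[e wp]; exists w; rewrite (trace_edge_in e) e wp.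
have [h [hh sh]] := trace_edge_cycle_hole Hs Hb SB c2 uc cS cyc.
by have := Hhole hh; rewrite sh; lia.
Qed.

Lemma exists_two_hangable (S : {set V}) : S \subset B -> 1 < #|S| -> two_hangable adj S.
Proof.
have [n] := ubnP #|S|; elim: n S => // n IH S /ltnSE cS SB S1.
have [/eqP/cards2P[z [z' [zz' ->]]]|S2] := eqVneq #|S| 2.
  exists z, z'; split=> //; rewrite ?inE ?eqxx ?orbT //.
    by exists z'; apply: hangs_pair; rewrite eq_sym.
  by exists z; rewrite setUC; apply: hangs_pair.
have IHb b : b \in S -> two_hangable adj (S :\ b).
  move=> bS; apply: IH; rewrite ?(subset_trans (subD1set S b) SB) //;
    by move: cS S1 S2; rewrite (cardsD1 b S) bS; lia.
have [|b [x [bS bx]]] := trace_edge_low_degree SB; first by rewrite -card_gt0 ltnW.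
have [z /setD1P[_ zS] [z' hz]] := hangable_lift (IHb b bS) bx.
have [y /setD1P[yz yS] hy] := hangable_lift (IHb z zS) (fun w => hangs_trace_edge hz).
by exists z, y; split=> //; [rewrite eq_sym | exists z'].
Qed.

Lemma hole_free_tree (S : {set V}) : S \subset B ->
  exists t, tree_on t S /\ forall a, connected_in t (trace adj S a).
Proof.
have [n] := ubnP #|S|; elim: n S => // n IH S /ltnSE cS SB.
have [S1|S2] := leqP #|S| 1.
  exists (fun _ _ => false); split=> [|a].
    by split; [|split; [|split; [exact: connected_in_le1 | move=> [|x [|y c]]]]].
  by apply: connected_in_le1; rewrite (leq_trans _ S1) // subset_leq_card // subsetIr.
have [z [_ [_ zS _ [z' [z'S z'z hz]] _]]] := exists_two_hangable SB S2.
have [|t [tT tS]] := IH (S :\ z) _ (subset_trans (subD1set S z) SB).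
  by move: cS; rewrite (cardsD1 z S) zS.
exists (add_leaf t z z'); split; first exact: tree_on_add_leaf.
move=> a; apply: (connected_in_add_leaf z'z) (hz a).
by rewrite /trace -setIDA; apply: tS.
Qed.

End HoleFree.

Theorem mainTheorem17 (V : finType) (adj : rel V) (A B A1 A2 : {set V}) :
  simple_graph adj ->
  bipartition adj A B ->
  A = A1 :|: A2 ->
  [disjoint A1 & A2] ->
  laminar adj A1 ->
  laminar adj A2 ->
  ((forall c : seq V, hole adj c -> size c = 4) <->
   (exists t : rel V, tree_on t B /\
      forall a, a \in A -> connected_in t (nbhd adj a))).
Proof.
move=> Hs Hb HA _ L1 L2; split=> [Hhole | [t [tB tN]] c].
  have [t [tB tS]] := hole_free_tree Hs Hb Hhole (subxx B).
  exists t; split=> // a aA; have := tS a.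
  by rewrite /trace (setIidPl (bipartition_nbhd Hb aA)).
exact: subtree_nbhds_hole_size4 Hb HA L1 L2 tB tN.
Qed.
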